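(* Let $a>0$, $u>0$ and $v\in\mathbb{R}$. The inequality $a\cosh x\le\cosh(ux+v)$ holds for all real $x$ if and only if $a\in(0,1]$, $u\ge1$ and $|v|\le v_0(a,u)$, where: if $u>1$, $$v_0=u\log\left(\frac{A}{a}+\frac{uB}{a}\right)-\log(A+B),\qquad A=\sqrt{\frac{u^2-a^2}{u^2-1}},\ B=\sqrt{\frac{1-a^2}{u^2-1}},$$ and if $u=1$, $v_0=-\log a$. *)

From Stdlib Require Import Reals.
Open Scope R_scope.

Definition vA (a u : R) : R := sqrt ((u ^ 2 - a ^ 2) / (u ^ 2 - 1)).
Definition vB (a u : R) : R := sqrt ((1 - a ^ 2) / (u ^ 2 - 1)).

Definition v0 (a u : R) : R :=
  if Req_EM_T u 1 then - ln a
  else u * ln (vA a u / a + u * vB a u / a) - ln (vA a u + vB a u).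

From Stdlib Require Import Reals Lra Psatz.
Open Scope R_scope.

(* For u > 1 write A = vA a u and B = vB a u, so that A^2 - B^2 = 1 and
   A^2 - u^2 B^2 = a^2.  With x* = ln ((A + u B) / a) and c* = ln (A + B) the
   addition formula gives a cosh (x* + d) = A cosh d + u B sinh d and
   cosh (c* + y) = A cosh y + B sinh y, while v0 = u x* - c*.  Hence
   a cosh x <= cosh (u x - v0) amounts to
   A cosh d + u B sinh d <= A cosh (u d) + B sinh (u d), true as B <= A and
   u >= 1, with equality at d = 0.  Evenness of cosh turns this into the
   sufficiency of |v| <= v0, and testing the hypothesis at x = x*, -x* and -v/u
   gives its necessity.  For u = 1 the bound -ln a comes from comparing both
   sides as x -> +-oo, and u < 1 is impossible because cosh (u x + v) grows more
   slowly than a cosh x. *)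

Lemma exp_le x y : x <= y -> exp x <= exp y.
Proof. intros [Hlt | ->]; [left; apply exp_increasing |]; lra. Qed.

Lemma ln_le x y : 0 < x -> x <= y -> ln x <= ln y.
Proof. intros Hx [Hlt | ->]; [left; apply ln_increasing |]; lra. Qed.

Lemma cosh_opp x : cosh (- x) = cosh x.
Proof. unfold cosh. rewrite Ropp_involutive. lra. Qed.

Lemma cosh_Rabs x : cosh (Rabs x) = cosh x.
Proof. unfold Rabs. destruct (Rcase_abs x); auto using cosh_opp. Qed.

Lemma cosh_add x y : cosh (x + y) = cosh x * cosh y + sinh x * sinh y.
Proof. unfold cosh, sinh. rewrite Ropp_plus_distr, !exp_plus. lra. Qed.

Lemma cosh_ln p : 0 < p -> cosh (ln p) = (p + / p) / 2.
Proof. intros Hp. unfold cosh. rewrite exp_Ropp, exp_ln; auto. Qed.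

Lemma sinh_ln p : 0 < p -> sinh (ln p) = (p - / p) / 2.
Proof. intros Hp. unfold sinh. rewrite exp_Ropp, exp_ln; auto. Qed.

Lemma sinh_nonneg x : 0 <= x -> 0 <= sinh x.
Proof.
  intros [Hx | <-]; [| rewrite sinh_0; lra].
  rewrite <- sinh_0. left. apply sinh_lt. exact Hx.
Qed.

Lemma cosh_lt_nonneg y z : 0 <= y < z -> cosh y < cosh z.
Proof.
  intros [Hy Hyz]. unfold cosh. rewrite !exp_Ropp.
  assert (HP : 1 <= exp y) by (rewrite <- exp_0; apply exp_le; lra).
  assert (HPQ : exp y < exp z) by (apply exp_increasing; lra).
  assert (Hdiff : (exp z + / exp z) - (exp y + / exp y)
                  = (exp z - exp y) * (exp y * exp z - 1) / (exp y * exp z))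
    by (field; lra).
  assert (0 < (exp z - exp y) * (exp y * exp z - 1) / (exp y * exp z)).
  { assert (1 < exp y * exp z) by nra.
    apply Rdiv_lt_0_compat; apply Rmult_lt_0_compat; lra. }
  lra.
Qed.

Lemma cosh_lt_Rabs y z : Rabs y < Rabs z -> cosh y < cosh z.
Proof.
  intros H. rewrite <- (cosh_Rabs y), <- (cosh_Rabs z).
  apply cosh_lt_nonneg. split; [apply Rabs_pos | exact H].
Qed.

Lemma cosh_le_Rabs y z : Rabs y <= Rabs z -> cosh y <= cosh z.
Proof.
  intros [H | H]; [left; apply cosh_lt_Rabs; exact H |].
  rewrite <- (cosh_Rabs y), <- (cosh_Rabs z), H. lra.
Qed.

Lemma Rabs_le_of_cosh_le y z : cosh y <= cosh z -> Rabs y <= Rabs z.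
Proof.
  intros H. destruct (Rle_lt_dec (Rabs y) (Rabs z)) as [Hle | Hlt]; auto.
  apply cosh_lt_Rabs in Hlt. lra.
Qed.

Lemma one_le_cosh x : 1 <= cosh x.
Proof. rewrite <- cosh_0. apply cosh_le_Rabs. rewrite Rabs_R0. apply Rabs_pos. Qed.

Lemma cosh_le_cosh_mul u x : 1 <= u -> cosh x <= cosh (u * x).
Proof.
  intros Hu. apply cosh_le_Rabs. rewrite Rabs_mult, (Rabs_right u) by lra.
  pose proof (Rabs_pos x). nra.
Qed.

Lemma cosh_le_exp_Rabs x : cosh x <= exp (Rabs x).
Proof.
  rewrite <- cosh_Rabs. unfold cosh. pose proof (Rabs_pos x).
  assert (exp (- Rabs x) <= exp (Rabs x)) by (apply exp_le; lra). lra.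
Qed.

Lemma nonpos_of_mul_exp_le c k : (forall x, 0 <= x -> c * exp x <= k) -> c <= 0.
Proof.
  intros H. destruct (Rle_lt_dec c 0) as [Hc | Hc]; auto.
  pose proof (Rabs_pos k). pose proof (Rle_abs k).
  assert (Hx : 0 <= Rabs k / c) by (apply Rmult_le_pos; [lra | left; apply Rinv_0_lt_compat; lra]).
  specialize (H _ Hx). pose proof (exp_ineq1_le (Rabs k / c)).
  assert (c * (1 + Rabs k / c) = c + Rabs k) by (field; lra).
  nra.
Qed.

Lemma le_of_derivative_nonneg (f f' : R -> R) s : 0 <= s ->
  (forall c, 0 <= c <= s -> derivable_pt_lim f c (f' c)) ->
  (forall c, 0 < c < s -> 0 <= f' c) -> f 0 <= f s.
Proof.
  intros [Hs | <-] Hd Hpos; [| lra].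
  destruct (MVT_cor2 f f' 0 s Hs Hd) as [c [Heq Hc]].
  pose proof (Hpos c Hc). nra.
Qed.

Lemma derivable_pt_lim_comp_scal g u x l :
  derivable_pt_lim g (u * x) l -> derivable_pt_lim (fun t => g (u * t)) x (l * u).
Proof.
  intros Hg. apply (derivable_pt_lim_comp (fun t => u * t) g); auto.
  pose proof (derivable_pt_lim_scal id u x 1 (derivable_pt_lim_id x)) as Hlin.
  rewrite Rmult_1_r in Hlin. exact Hlin.
Qed.

Lemma sinh_mul_ge u d : 1 <= u -> 0 <= d -> u * sinh d <= sinh (u * d).
Proof.
  intros Hu Hd.
  pose proof (le_of_derivative_nonneg (fun t => sinh (u * t) - u * sinh t)
    (fun t => cosh (u * t) * u - u * cosh t) d Hd) as H.
  simpl in H. rewrite Rmult_0_r, sinh_0 in H.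
  enough (0 - u * 0 <= sinh (u * d) - u * sinh d) by lra.
  apply H.
  - intros c _.
    apply (derivable_pt_lim_minus (fun t => sinh (u * t)) (mult_real_fct u sinh)).
    + apply derivable_pt_lim_comp_scal, derivable_pt_lim_sinh.
    + apply derivable_pt_lim_scal, derivable_pt_lim_sinh.
  - intros c _. pose proof (cosh_le_cosh_mul u c Hu). nra.
Qed.

Lemma cosh_sub_mul_sinh_le u s : 1 <= u -> 0 <= s ->
  cosh s - u * sinh s <= exp (- (u * s)).
Proof.
  intros Hu Hs.
  pose proof (le_of_derivative_nonneg (fun t => exp (- u * t) - cosh t + u * sinh t)
    (fun t => exp (- u * t) * - u - sinh t + u * cosh t) s Hs) as H.
  simpl in H. rewrite Rmult_0_r, sinh_0, cosh_0, exp_0 in H.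
  replace (- (u * s)) with (- u * s) by ring.
  enough (1 - 1 + u * 0 <= exp (- u * s) - cosh s + u * sinh s) by lra.
  apply H.
  - intros c _.
    apply (derivable_pt_lim_plus (fun t => exp (- u * t) - cosh t) (mult_real_fct u sinh)).
    + apply (derivable_pt_lim_minus (fun t => exp (- u * t)) cosh).
      * apply derivable_pt_lim_comp_scal, derivable_pt_lim_exp.
      * apply derivable_pt_lim_cosh.
    + apply derivable_pt_lim_scal, derivable_pt_lim_sinh.
  - intros c Hc.
    assert (Hexp : exp (- u * c) <= exp (- c)) by (apply exp_le; nra).
    assert (Hcs : exp (- c) = cosh c - sinh c) by (unfold cosh, sinh; lra).
    pose proof (sinh_nonneg c ltac:(lra)). nra.
Qed.

(* For [d < 0] both [sinh] terms are negative; by [cosh_sub_mul_sinh_le] the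
   gain [cosh (u d) - cosh d] exceeds their difference, and [B <= A] concludes. *)
Lemma cosh_sinh_combination_le A B u d : 0 <= B -> B <= A -> 1 <= u ->
  A * cosh d + u * B * sinh d <= A * cosh (u * d) + B * sinh (u * d).
Proof.
  intros HB HBA Hu.
  pose proof (cosh_le_cosh_mul u d Hu) as Hcosh.
  destruct (Rle_lt_dec 0 d) as [Hd | Hd].
  - pose proof (sinh_mul_ge u d Hu Hd). nra.
  - pose proof (sinh_mul_ge u (- d) Hu ltac:(lra)) as Hsinh.
    pose proof (cosh_sub_mul_sinh_le u (- d) Hu ltac:(lra)) as Hexp.
    replace (u * - d) with (- (u * d)) in * by ring.
    rewrite Ropp_involutive in Hexp.
    unfold cosh, sinh in *. rewrite !Ropp_involutive in *. nra.
Qed.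

Lemma exp_opp_mul_cosh_le w x : 0 <= w -> exp (- w) * cosh x <= cosh (x - w).
Proof.
  intros Hw. unfold cosh.
  replace (- (x - w)) with (- x + w) by ring. rewrite !exp_plus.
  unfold Rminus. rewrite exp_plus.
  assert (exp (- w) <= exp w) by (apply exp_le; lra).
  pose proof (exp_pos (- x)). nra.
Qed.

Lemma a_cosh_le_one a u v : 0 < u ->
  (forall x, a * cosh x <= cosh (u * x + v)) -> a * cosh (v / u) <= 1.
Proof.
  intros Hu H. specialize (H (- (v / u))).
  replace (u * - (v / u) + v) with 0 in H by (field; lra).
  rewrite cosh_opp, cosh_0 in H. exact H.
Qed.

Lemma cosh_le_shift_opp a u v :
  (forall x, a * cosh x <= cosh (u * x + v)) -> forall x, a * cosh x <= cosh (u * x + - v).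
Proof.
  intros H x. specialize (H (- x)).
  replace (u * - x + v) with (- (u * x + - v)) in H by ring.
  rewrite !cosh_opp in H. exact H.
Qed.

(* Below [w / u] the left side is at most [a cosh (w / u) <= 1]; beyond it,
   [|u x + v| >= u |x| - w >= 0]. *)
Lemma cosh_le_of_shifted a u w v : 0 < a -> 0 < u ->
  (forall x, a * cosh x <= cosh (u * x - w)) -> Rabs v <= w ->
  forall x, a * cosh x <= cosh (u * x + v).
Proof.
  intros Ha Hu H Hv x.
  pose proof (Rabs_pos v). pose proof (Rabs_pos x).
  rewrite <- (cosh_Rabs x).
  destruct (Rle_lt_dec w (u * Rabs x)) as [Hfar | Hnear].
  - apply (Rle_trans _ _ _ (H (Rabs x))). apply cosh_le_Rabs.
    assert (Htri : u * Rabs x - Rabs v <= Rabs (u * x + v)).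
    { pose proof (Rabs_triang (u * x + v) (- v)) as Ht.
      rewrite Rabs_Ropp, Rplus_assoc, Rplus_opp_r, Rplus_0_r, Rabs_mult,
        (Rabs_right u) in Ht by lra. lra. }
    rewrite Rabs_right; lra.
  - pose proof (H (w / u)) as Hw.
    replace (u * (w / u) - w) with 0 in Hw by (field; lra). rewrite cosh_0 in Hw.
    assert (cosh (Rabs x) <= cosh (w / u)).
    { apply cosh_le_Rabs. rewrite Rabs_Rabsolu, (Rabs_right (w / u)).
      - apply (Rmult_le_reg_l u); [lra |]. replace (u * (w / u)) with w by (field; lra). lra.
      - apply Rle_ge, Rmult_le_pos; [lra | left; apply Rinv_0_lt_compat; lra]. }
    pose proof (one_le_cosh (u * x + v)). nra.
Qed.

Lemma one_le_of_cosh_le a u v : 0 < a -> 0 < u ->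
  (forall x, a * cosh x <= cosh (u * x + v)) -> 1 <= u.
Proof.
  intros Ha Hu H. destruct (Rle_lt_dec 1 u) as [Hu1 | Hu1]; auto. exfalso.
  enough (a / 2 <= 0) by lra.
  apply (nonpos_of_mul_exp_le _ (exp (Rabs v))). intros y Hy.
  set (x := y / (1 - u)).
  assert (Hx : 0 <= x) by (apply Rmult_le_pos; [lra | left; apply Rinv_0_lt_compat; lra]).
  assert (Hy_eq : y = x + - (u * x)) by (unfold x; field; lra).
  assert (Hlow : a / 2 * exp x <= a * cosh x) by (unfold cosh; pose proof (exp_pos (- x)); nra).
  assert (Hup : cosh (u * x + v) <= exp (u * x) * exp (Rabs v)).
  { rewrite <- exp_plus. apply (Rle_trans _ _ _ (cosh_le_exp_Rabs _)), exp_le.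
    apply (Rle_trans _ _ _ (Rabs_triang _ _)). rewrite Rabs_right by nra. lra. }
  pose proof (H x) as Hx'.
  rewrite Hy_eq, exp_plus, exp_Ropp.
  pose proof (exp_pos (u * x)).
  apply (Rmult_le_reg_l (exp (u * x))); [lra |].
  replace (exp (u * x) * (a / 2 * (exp x * / exp (u * x)))) with (a / 2 * exp x) by (field; lra).
  nra.
Qed.

Lemma le_exp_of_cosh_le a v : (forall x, a * cosh x <= cosh (1 * x + v)) -> a <= exp v.
Proof.
  intros H.
  enough (a - exp v <= 0) by lra.
  apply (nonpos_of_mul_exp_le _ (exp (- v) - a)). intros y _.
  specialize (H (y / 2)). rewrite Rmult_1_l in H. unfold cosh in H.
  assert (Hy : exp (y / 2) * exp (y / 2) = exp y) by (rewrite <- exp_plus; f_equal; field).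
  rewrite Ropp_plus_distr, !exp_plus, exp_Ropp in H.
  pose proof (exp_pos (y / 2)).
  assert (Hmul := Rmult_le_compat_l (2 * exp (y / 2)) _ _ ltac:(lra) H).
  replace (2 * exp (y / 2) * (a * ((exp (y / 2) + / exp (y / 2)) / 2)))
    with (a * (exp (y / 2) * exp (y / 2)) + a) in Hmul by (field; lra).
  replace (2 * exp (y / 2) * ((exp (y / 2) * exp v + / exp (y / 2) * exp (- v)) / 2))
    with (exp (y / 2) * exp (y / 2) * exp v + exp (- v)) in Hmul by (field; lra).
  rewrite Hy in Hmul. lra.
Qed.

Lemma Rabs_le_v0_1 a v : 0 < a ->
  (forall x, a * cosh x <= cosh (1 * x + v)) -> Rabs v <= - ln a.
Proof.
  intros Ha H.
  pose proof (le_exp_of_cosh_le a v H) as Hpos.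
  pose proof (le_exp_of_cosh_le a (- v) (cosh_le_shift_opp a 1 v H)) as Hneg.
  apply (ln_le _ _ Ha) in Hpos, Hneg. rewrite ln_exp in Hpos, Hneg.
  unfold Rabs. destruct (Rcase_abs v); lra.
Qed.

(* The graphs of [a cosh x] and [cosh (u x - v0 a u)] touch at [x = xstar a u],
   where both equal [vA a u = cosh (cstar a u)]. *)
Definition xstar (a u : R) : R := ln (vA a u / a + u * vB a u / a).
Definition cstar (a u : R) : R := ln (vA a u + vB a u).

Lemma v0_1 a : v0 a 1 = - ln a.
Proof. unfold v0. destruct (Req_EM_T 1 1); [reflexivity | lra]. Qed.

Section Threshold.

Variables a u : R.
Hypotheses (Ha : 0 < a) (Ha1 : a <= 1) (Hu : 1 < u).

Let A := vA a u.
Let B := vB a u.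

Lemma v0_gt1 : v0 a u = u * xstar a u - cstar a u.
Proof. unfold v0. destruct (Req_EM_T u 1); [lra | reflexivity]. Qed.

Lemma vA_vB_sq : A * A - B * B = 1 /\ A * A - u * u * (B * B) = a * a.
Proof.
  assert (Hd : 0 < u ^ 2 - 1) by nra.
  assert (HA : A * A = (u ^ 2 - a ^ 2) / (u ^ 2 - 1)).
  { apply sqrt_sqrt, Rmult_le_pos; [nra | left; apply Rinv_0_lt_compat; lra]. }
  assert (HB : B * B = (1 - a ^ 2) / (u ^ 2 - 1)).
  { apply sqrt_sqrt, Rmult_le_pos; [nra | left; apply Rinv_0_lt_compat; lra]. }
  rewrite HA, HB. split; field; lra.
Qed.

Lemma vA_vB_bounds : 0 <= B /\ B < A /\ 1 <= A.
Proof.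
  destruct vA_vB_sq as [H1 _].
  assert (0 <= A) by apply sqrt_pos. assert (0 <= B) by apply sqrt_pos. nra.
Qed.

Lemma one_le_xstar_arg : 1 <= A / a + u * B / a.
Proof.
  destruct vA_vB_bounds as [HB [HBA HA]].
  assert (1 <= A / a).
  { apply (Rmult_le_reg_l a); [lra |]. unfold Rdiv. rewrite <- Rmult_assoc, Rinv_r_simpl_m; lra. }
  assert (0 <= u * B / a) by (apply Rmult_le_pos; [nra | left; apply Rinv_0_lt_compat; lra]).
  lra.
Qed.

Lemma a_cosh_xstar_add d : a * cosh (xstar a u + d) = A * cosh d + u * B * sinh d.
Proof.
  destruct vA_vB_sq as [_ H2]. destruct vA_vB_bounds as [HB [HBA HA]].
  assert (Hp : 0 < A / a + u * B / a) by (pose proof one_le_xstar_arg; lra).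
  assert (Hinv : / (A / a + u * B / a) = (A - u * B) / a).
  { field_simplify_eq; [nra | split; [lra |]].
    intro H0. assert (A + u * B = 0) by (field_simplify in H0; nra). nra. }
  unfold xstar. fold A B.
  rewrite cosh_add, cosh_ln, sinh_ln, Hinv by exact Hp. field. lra.
Qed.

Lemma cosh_cstar_add y : cosh (cstar a u + y) = A * cosh y + B * sinh y.
Proof.
  destruct vA_vB_sq as [H1 _]. destruct vA_vB_bounds as [HB [HBA HA]].
  assert (Hinv : / (A + B) = A - B) by (field_simplify_eq; nra).
  unfold cstar. fold A B.
  rewrite cosh_add, cosh_ln, sinh_ln, Hinv by lra. field.
Qed.

Lemma xstar_cstar_nonneg : 0 <= xstar a u /\ 0 <= cstar a u.
Proof.
  destruct vA_vB_bounds as [HB [HBA HA]]. pose proof one_le_xstar_arg.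
  rewrite <- ln_1. unfold xstar, cstar. fold A B. split; apply ln_le; lra.
Qed.

Lemma a_cosh_xstar : a * cosh (xstar a u) = cosh (cstar a u).
Proof.
  rewrite <- (Rplus_0_r (xstar a u)), <- (Rplus_0_r (cstar a u)).
  rewrite a_cosh_xstar_add, cosh_cstar_add, sinh_0. ring.
Qed.

Lemma cosh_le_cosh_sub_v0_gt1 x : a * cosh x <= cosh (u * x - v0 a u).
Proof.
  destruct vA_vB_bounds as [HB [HBA _]].
  replace x with (xstar a u + (x - xstar a u)) at 1 by ring.
  replace (u * x - v0 a u) with (cstar a u + u * (x - xstar a u)) by (rewrite v0_gt1; ring).
  rewrite a_cosh_xstar_add, cosh_cstar_add.
  apply cosh_sinh_combination_le; lra.
Qed.

Lemma Rabs_le_v0_gt1 v :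
  (forall x, a * cosh x <= cosh (u * x + v)) -> Rabs v <= v0 a u.
Proof.
  intros H.
  destruct xstar_cstar_nonneg as [Hx Hc].
  pose proof a_cosh_xstar as Htouch.
  assert (Hcenter : Rabs v <= u * xstar a u).
  { pose proof (a_cosh_le_one a u v ltac:(lra) H).
    pose proof (one_le_cosh (cstar a u)).
    assert (Hle : cosh (v / u) <= cosh (xstar a u)) by nra.
    apply Rabs_le_of_cosh_le in Hle.
    unfold Rdiv in Hle.
    rewrite (Rabs_right (xstar a u)), Rabs_mult, Rabs_inv, (Rabs_right u) in Hle by lra.
    apply (Rmult_le_compat_l u) in Hle; [| lra].
    replace (u * (Rabs v * / u)) with (Rabs v) in Hle by (field; lra). exact Hle. }
  pose proof (Rle_abs v). pose proof (Rle_abs (- v)) as Hopp. rewrite Rabs_Ropp in Hopp.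
  assert (Hplus := H (xstar a u)). assert (Hminus := H (- xstar a u)).
  replace (u * - xstar a u + v) with (- (u * xstar a u - v)) in Hminus by ring.
  rewrite !cosh_opp, Htouch in Hminus. rewrite Htouch in Hplus.
  apply Rabs_le_of_cosh_le in Hplus, Hminus.
  rewrite (Rabs_right (cstar a u)), Rabs_right in Hplus, Hminus by lra.
  rewrite v0_gt1. apply Rabs_le. lra.
Qed.

End Threshold.

Lemma cosh_le_cosh_sub_v0 a u x : 0 < a -> a <= 1 -> 1 <= u ->
  a * cosh x <= cosh (u * x - v0 a u).
Proof.
  intros Ha Ha1 Hu. destruct (Req_dec u 1) as [-> | Hne].
  - rewrite v0_1, Rmult_1_l.
    pose proof (ln_le a 1 Ha Ha1) as Hln. rewrite ln_1 in Hln.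
    pose proof (exp_opp_mul_cosh_le (- ln a) x ltac:(lra)) as Hx.
    rewrite Ropp_involutive, exp_ln in Hx by exact Ha. exact Hx.
  - apply cosh_le_cosh_sub_v0_gt1; lra.
Qed.

Lemma Rabs_le_v0 a u v : 0 < a -> a <= 1 -> 1 <= u ->
  (forall x, a * cosh x <= cosh (u * x + v)) -> Rabs v <= v0 a u.
Proof.
  intros Ha Ha1 Hu H. destruct (Req_dec u 1) as [-> | Hne].
  - rewrite v0_1. exact (Rabs_le_v0_1 a v Ha H).
  - apply Rabs_le_v0_gt1; auto; lra.
Qed.

Theorem lemma5 (a u v : R) (ha : 0 < a) (hu : 0 < u) :
  (forall x : R, a * cosh x <= cosh (u * x + v)) <->
  (a <= 1 /\ 1 <= u /\ Rabs v <= v0 a u).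
Proof.
  split.
  - intros H.
    assert (Ha1 : a <= 1).
    { pose proof (a_cosh_le_one a u v hu H). pose proof (one_le_cosh (v / u)). nra. }
    pose proof (one_le_of_cosh_le a u v ha hu H) as Hu1.
    auto using Rabs_le_v0.
  - intros (Ha1 & Hu1 & Hv).
    apply (cosh_le_of_shifted a u (v0 a u)); auto.
    intros x. apply cosh_le_cosh_sub_v0; assumption.
Qed.
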